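(* Let $(M,d)$ be a complete pointed metric space and $f\in\mathrm{Lip}_0(M,M)$ such that $\mathrm{int}(R_{\widehat f})\neq\emptyset$, and assume there is $C>0$ with $\mathrm{Lip}(f^n)\le C$ for all $n\in\mathbb N$. Then $R_{\widehat f}=\mathcal F(M)$. Moreover, if $M$ is separable, then $\widehat f$ is a rigid operator.
   Context: A pointed metric space is a metric space with a distinguished point $0$. $\mathrm{Lip}_0(M,M)$ denotes the Lipschitz maps $f:M\to M$ with $f(0)=0$, $\mathrm{Lip}(f)$ the least Lipschitz constant; $\mathrm{Lip}_0(M)$ the real-valued Lipschitz functions vanishing at $0$ normed by $\mathrm{Lip}$. $\delta:M\to\mathrm{Lip}_0(M)^*$, $\delta(x)(\varphi)=\varphi(x)$; $\mathcal F(M)$ is the norm-closed linear span of $\delta(M)$. $\widehat f$ is the unique bounded linear operator on $\mathcal F(M)$ with $\widehat f(\delta(x))=\delta(f(x))$. For an operator $T$, $R_T=\{\mu:\liminf_{n}\|T^n\mu-\mu\|=0\}$. A bounded linear operator $T$ on a Banach space $X$ is rigid if there is an increasing sequence $(n(j))_j\subset\mathbb N$ with $T^{n(j)}x\to x$ for every $x\in X$. *)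

From Stdlib Require Import Reals List.
Open Scope R_scope.

Definition is_metric {M : Type} (d : M -> M -> R) : Prop :=
  (forall x y, 0 <= d x y) /\
  (forall x y, d x y = 0 <-> x = y) /\
  (forall x y, d x y = d y x) /\
  (forall x y z, d x z <= d x y + d y z).

Definition cauchy_seq {M : Type} (d : M -> M -> R) (u : nat -> M) : Prop :=
  forall eps, 0 < eps -> exists N, forall n m, (N <= n)%nat -> (N <= m)%nat ->
    d (u n) (u m) < eps.

Definition seq_converges {M : Type} (d : M -> M -> R) (u : nat -> M) (x : M) : Prop :=
  forall eps, 0 < eps -> exists N, forall n, (N <= n)%nat -> d (u n) x < eps.

Definition complete_metric {M : Type} (d : M -> M -> R) : Prop :=
  forall u, cauchy_seq d u -> exists x, seq_converges d u x.

(* a (pointed, hence nonempty) metric space is separable iff it has a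
   dense sequence *)
Definition separable_metric {M : Type} (d : M -> M -> R) : Prop :=
  exists s : nat -> M, forall x eps, 0 < eps -> exists n, d x (s n) < eps.

Definition lipschitz_map {M : Type} (d : M -> M -> R) (L : R) (g : M -> M) : Prop :=
  forall x y, d (g x) (g y) <= L * d x y.

Definition lip0_fun {M : Type} (d : M -> M -> R) (x0 : M) (L : R) (phi : M -> R) : Prop :=
  phi x0 = 0 /\ forall x y, Rabs (phi x - phi y) <= L * d x y.

(* An element of Lip_0(M)^* is represented by its action on functions
   M -> R; only its values on Lip_0(M) are ever used. *)
Definition functional (M : Type) := (M -> R) -> R.

(* dual norm:  || mu - nu ||_{Lip_0(M)^*} <= r *)
Definition fdist_le {M : Type} (d : M -> M -> R) (x0 : M)
  (mu nu : functional M) (r : R) : Prop :=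
  forall (L : R) (phi : M -> R), 0 <= L -> lip0_fun d x0 L phi ->
    Rabs (mu phi - nu phi) <= r * L.

(* || mu - nu || < r  (the sup is attained as a bound) *)
Definition fdist_lt {M : Type} (d : M -> M -> R) (x0 : M)
  (mu nu : functional M) (r : R) : Prop :=
  exists r', r' < r /\ fdist_le d x0 mu nu r'.

(* finite linear combination  sum_i a_i delta(x_i) *)
Definition molecule {M : Type} (l : list (R * M)) : functional M :=
  fun phi => fold_right (fun p acc => fst p * phi (snd p) + acc) 0 l.

(* mu belongs to F(M) = norm-closed linear span of delta(M) *)
Definition in_FM {M : Type} (d : M -> M -> R) (x0 : M) (mu : functional M) : Prop :=
  forall eps, 0 < eps -> exists l : list (R * M), fdist_le d x0 mu (molecule l) eps.

(* (\hat f)^n mu : phi |-> mu (phi o f^n)  (restriction of the adjoint of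
   the composition operator, which agrees with \hat f^n on F(M)) *)
Definition hatf_iter {M : Type} (f : M -> M) (n : nat) (mu : functional M) : functional M :=
  fun phi => mu (fun x => phi (Nat.iter n f x)).

(* R_{\hat f} = { mu in F(M) : liminf_n || \hat f^n mu - mu || = 0 } *)
Definition in_R_hatf {M : Type} (d : M -> M -> R) (x0 : M) (f : M -> M)
  (mu : functional M) : Prop :=
  in_FM d x0 mu /\
  forall eps, 0 < eps -> forall N, exists n, (N <= n)%nat /\
    fdist_le d x0 (hatf_iter f n mu) mu eps.

(* int(R_{\hat f}) <> empty, interior taken in F(M) *)
Definition R_hatf_interior_nonempty {M : Type} (d : M -> M -> R) (x0 : M)
  (f : M -> M) : Prop :=
  exists mu0, in_FM d x0 mu0 /\ exists r, 0 < r /\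
    forall nu, in_FM d x0 nu -> fdist_lt d x0 nu mu0 r -> in_R_hatf d x0 f nu.

Definition hatf_rigid {M : Type} (d : M -> M -> R) (x0 : M) (f : M -> M) : Prop :=
  exists nj : nat -> nat, (forall j, (nj j < nj (S j))%nat) /\
    forall mu, in_FM d x0 mu ->
      forall eps, 0 < eps -> exists J, forall j, (J <= j)%nat ->
        fdist_le d x0 (hatf_iter f (nj j) mu) mu eps.

(* Structure of the proof.
   1. Matching: for nu = sum_(p in P) c(p) delta(p) with nonzero, pairwise
      distinct coefficients, ||nu o w - nu|| small forces d(w p, p) small on P
      ([near_fixed_points]); this uses separated tent functions as test
      functions, a mass-balance count and the finiteness of P.
   2. Joint recurrence: a perturbation of a molecule close to an interior
      point of R_{hat f} has distinct nonzero coefficients and any prescribed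
      finite set in its support; being recurrent, by 1 the points of this
      finite set return close to themselves at a common late time
      ([joint_recurrence]).
   3. Equicontinuity: since molecules are dense and Lip(f^n) <= C, hat f^n mu
      is close to mu as soon as f^n almost fixes finitely many points
      ([small_displacement_suffices]).
   Recurrence of every mu follows from 2 and 3.  For rigidity, a diagonal
   choice of return times for a dense sequence ([diagonal_return_times]) works
   for every point of M by equicontinuity, hence by 3 for every mu. *)

From Stdlib Require Import Reals List Lra Lia ClassicalEpsilon Classical.
Open Scope R_scope.

Definition eqdec {A : Type} (x y : A) : {x = y} + {x <> y} :=
  excluded_middle_informative (x = y).

Fixpoint lsum {A : Type} (g : A -> R) (l : list A) : R :=
  match l with nil => 0 | a :: l' => g a + lsum g l' end.

Section FiniteSums.
Context {A : Type}.
Implicit Types (g h : A -> R) (l : list A).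

Lemma lsum_ext g h l : (forall x, In x l -> g x = h x) -> lsum g l = lsum h l.
Proof. induction l; simpl; intros H; auto. rewrite H, IHl; auto. Qed.

Lemma lsum_plus g h l : lsum (fun x => g x + h x) l = lsum g l + lsum h l.
Proof. induction l; simpl; lra. Qed.

Lemma lsum_minus g h l : lsum (fun x => g x - h x) l = lsum g l - lsum h l.
Proof. induction l; simpl; lra. Qed.

Lemma lsum_scal k g l : lsum (fun x => k * g x) l = k * lsum g l.
Proof. induction l; simpl; lra. Qed.

Lemma lsum_le g h l : (forall x, In x l -> g x <= h x) -> lsum g l <= lsum h l.
Proof.
  induction l; simpl; intros H; [lra|].
  pose proof (H a (or_introl eq_refl)). assert (lsum g l <= lsum h l) by auto. lra.
Qed.

Lemma lsum_zero g l : (forall x, In x l -> g x = 0) -> lsum g l = 0.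
Proof. induction l; simpl; intros H; auto. rewrite H, IHl; auto. lra. Qed.

Lemma lsum_nonneg g l : (forall x, In x l -> 0 <= g x) -> 0 <= lsum g l.
Proof.
  intros H. rewrite <- (lsum_zero (fun _ => 0) l) by auto. apply lsum_le; auto.
Qed.

Lemma lsum_term_le g l y : (forall x, In x l -> 0 <= g x) -> In y l -> g y <= lsum g l.
Proof.
  induction l; simpl; intros H Hy; [contradiction|].
  destruct Hy as [<-|Hy].
  - assert (0 <= lsum g l) by (apply lsum_nonneg; auto). lra.
  - pose proof (H a (or_introl eq_refl)). assert (g y <= lsum g l) by auto. lra.
Qed.

Lemma lsum_abs g l : Rabs (lsum g l) <= lsum (fun x => Rabs (g x)) l.
Proof.
  induction l; simpl; [rewrite Rabs_R0; lra|].
  eapply Rle_trans; [apply Rabs_triang | lra].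
Qed.

Lemma lsum_single g l p : NoDup l -> In p l ->
  (forall x, In x l -> x <> p -> g x = 0) -> lsum g l = g p.
Proof.
  induction l; simpl; intros Hn Hp H; [contradiction|].
  inversion Hn; subst. destruct Hp as [<-|Hp].
  - rewrite lsum_zero; [lra|]. intros x Hx. apply H; auto. intros ->; contradiction.
  - rewrite H, IHl; auto; [lra|]. intros ->; contradiction.
Qed.

End FiniteSums.

Lemma finite_lower_bound {A : Type} (g : A -> R) (l : list A) :
  (forall x, In x l -> 0 < g x) -> exists m, 0 < m /\ forall x, In x l -> m <= g x.
Proof.
  induction l as [|a l IH]; intros H.
  - exists 1. split; [lra | intros x []].
  - destruct IH as [m [Hm Hle]]; [intros; apply H; right; auto|].
    exists (Rmin (g a) m). split; [apply Rmin_glb_lt; auto; apply H; left; auto|].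
    intros x [<-|Hx]; [apply Rmin_l | eapply Rle_trans; [apply Rmin_r | auto]].
Qed.

Lemma finite_pair_lower_bound {A : Type} (g : A -> A -> R) (l : list A) :
  (forall x y, In x l -> In y l -> x <> y -> 0 < g x y) ->
  exists m, 0 < m /\ forall x y, In x l -> In y l -> x <> y -> m <= g x y.
Proof.
  intros H.
  destruct (finite_lower_bound (fun xy => if eqdec (fst xy) (snd xy) then 1 else g (fst xy) (snd xy))
              (list_prod l l)) as [m [Hm Hle]].
  - intros [x y] Hxy. apply in_prod_iff in Hxy as [Hx Hy]. simpl.
    destruct (eqdec x y); [lra | auto].
  - exists m. split; auto. intros x y Hx Hy Hxy.
    pose proof (Hle (x, y) (in_prod _ _ _ _ Hx Hy)) as Hm'. simpl in Hm'.
    destruct (eqdec x y); [contradiction | exact Hm'].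
Qed.

Lemma onto_self_map_injective {A : Type} (s : A -> A) (l : list A) :
  NoDup l -> (forall q, In q l -> exists p, In p l /\ s p = q) ->
  forall p p', In p l -> In p' l -> s p = s p' -> p = p'.
Proof.
  intros Hnd Honto.
  assert (Hmap : NoDup (map s l)).
  { apply (@NoDup_incl_NoDup _ l (map s l)); auto; [rewrite length_map; lia|].
    intros q Hq. destruct (Honto q Hq) as [p [Hp <-]]. apply in_map; auto. }
  clear Honto Hnd. induction l as [|a l IH]; simpl; intros p p' Hp Hp' E; [contradiction|].
  inversion Hmap as [|b k Hnotin Hmap']; subst.
  destruct Hp as [<-|Hp]; destruct Hp' as [<-|Hp']; auto;
    exfalso; apply Hnotin; [rewrite E | rewrite <- E]; apply in_map; auto.
Qed.

Lemma Rmax_lip a b a' b' k : Rabs (a - a') <= k -> Rabs (b - b') <= k ->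
  Rabs (Rmax a b - Rmax a' b') <= k.
Proof.
  unfold Rmax; destruct (Rle_dec a b); destruct (Rle_dec a' b');
    intros H1 H2; unfold Rabs in *; repeat destruct Rcase_abs; lra.
Qed.

Section TestFunctions.
Context {M : Type}.
Variables (d : M -> M -> R) (rho : R).
Hypothesis Hmet : is_metric d.
Hypothesis Hrho : 0 <= rho.

Definition tent (q y : M) : R := Rmax 0 (rho - d y q).

Definition peak (S : list M) (y : M) : R :=
  fold_right (fun q acc => Rmax (tent q y) acc) 0 S.

Lemma tent_lip q y z : Rabs (tent q y - tent q z) <= d y z.
Proof.
  destruct Hmet as [Hp [_ [Hs Ht]]]. unfold tent. apply Rmax_lip.
  - rewrite Rminus_0_r, Rabs_R0; auto.
  - pose proof (Ht z y q). pose proof (Ht y z q). rewrite (Hs z y) in *.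
    unfold Rabs; destruct Rcase_abs; lra.
Qed.

Lemma tent_bounds q y : 0 <= tent q y <= rho.
Proof.
  destruct Hmet as [Hp _]. pose proof (Hp y q). unfold tent.
  split; [apply Rmax_l | apply Rmax_lub; lra].
Qed.

Lemma tent_center q : tent q q = rho.
Proof.
  destruct Hmet as [_ [Hz _]]. unfold tent.
  replace (d q q) with 0 by (symmetry; apply Hz; auto).
  rewrite Rminus_0_r. apply Rmax_right; auto.
Qed.

Lemma tent_far q y : rho <= d y q -> tent q y = 0.
Proof. intros H. unfold tent. apply Rmax_left. lra. Qed.

Lemma tent_near q y : d y q <= rho -> tent q y = rho - d y q.
Proof. intros H. unfold tent. apply Rmax_right. lra. Qed.

Lemma peak_lip S y z : Rabs (peak S y - peak S z) <= d y z.
Proof.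
  induction S; simpl.
  - rewrite Rminus_0_r, Rabs_R0. apply Hmet.
  - apply Rmax_lip; auto. apply tent_lip.
Qed.

Lemma peak_bounds S y : 0 <= peak S y <= rho.
Proof.
  induction S as [|q S IH]; simpl; [lra|].
  pose proof (tent_bounds q y). split.
  - eapply Rle_trans; [apply IH | apply Rmax_r].
  - apply Rmax_lub; lra.
Qed.

Lemma peak_center S q : In q S -> peak S q = rho.
Proof.
  intros Hq. apply Rle_antisym; [apply peak_bounds|].
  induction S as [|a S IH]; simpl in *; [contradiction|].
  destruct Hq as [<-|Hq].
  - rewrite tent_center at 1. apply Rmax_l.
  - eapply Rle_trans; [apply IH; auto | apply Rmax_r].
Qed.

Lemma peak_far S y : (forall q, In q S -> rho <= d y q) -> peak S y = 0.
Proof.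
  induction S as [|q S IH]; simpl; intros H; auto.
  rewrite tent_far, IH by auto. apply Rmax_left; lra.
Qed.

Lemma peak_witness S y t : 0 < t -> t <= peak S y -> exists q, In q S /\ d y q <= rho - t.
Proof.
  induction S as [|q S IH]; simpl; intros Ht H; [lra|].
  apply Rmax_Rle in H as [H|H].
  - exists q. split; [left; auto|]. unfold tent, Rmax in H. destruct Rle_dec; lra.
  - destruct IH as [q' [Hq' Hd]]; auto. exists q'. split; [right|]; auto.
Qed.

End TestFunctions.

Definition push {M : Type} (w : M -> M) (mu : functional M) : functional M :=
  fun phi => mu (fun y => phi (w y)).

Definition delta_sum {M : Type} (c : M -> R) (P : list M) : functional M :=
  fun phi => lsum (fun p => c p * phi p) P.

(* Combinations with distinct coefficients detect displacements: if the transport of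
   nu = sum c(p) delta(p) by a map w is close to nu, then w moves no point of
   the support far.  Separated test functions show that each w(p) lies near
   some support point sel(p) (a signed peak) and that sel preserves mass
   (single tents); mass balance forces sel to be onto, hence a permutation, and
   distinctness of the coefficients forces it to be the identity. *)
Section Matching.
Context {M : Type}.
Variables (d : M -> M -> R) (x0 : M).
Hypothesis Hmet : is_metric d.
Variables (P : list M) (c : M -> R).
Hypothesis HnodupP : NoDup P.
Hypothesis Hx0P : ~ In x0 P.
Hypothesis Hc0 : forall p, In p P -> c p <> 0.

(* A self-map of the support that transports the coefficients up to less than
   both the smallest coefficient and the smallest gap between coefficients is
   the identity: it is onto (no point is left without mass), hence a
   permutation, and then each point receives exactly the coefficient of its
   preimage, which must therefore be itself. *)
Lemma mass_preserving_selection_is_identity (sel : M -> M) (g0 : R) :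
  (forall p, In p P -> In (sel p) P) ->
  (forall p, In p P -> g0 <= Rabs (c p)) ->
  (forall p q, In p P -> In q P -> p <> q -> g0 <= Rabs (c p - c q)) ->
  (forall q, In q P -> Rabs (lsum (fun p => if eqdec (sel p) q then c p else 0) P - c q) < g0) ->
  forall p, In p P -> sel p = p.
Proof.
  intros Hsel Hmin Hgap HG.
  assert (Honto : forall q, In q P -> exists p, In p P /\ sel p = q).
  { intros q Hq. apply NNPP. intros Hno. pose proof (HG q Hq) as H. pose proof (Hmin q Hq).
    rewrite lsum_zero, Rminus_0_l, Rabs_Ropp in H; [lra|].
    intros x Hx. destruct eqdec as [E|]; auto. exfalso. apply Hno. exists x. auto. }
  pose proof (onto_self_map_injective sel P HnodupP Honto) as Hinj.
  intros p Hp. pose proof (HG (sel p) (Hsel p Hp)) as H.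
  rewrite (lsum_single _ P p) in H; auto.
  - destruct eqdec; [|contradiction].
    destruct (eqdec (sel p) p) as [Ep|Ne]; auto. exfalso.
    pose proof (Hgap p (sel p) Hp (Hsel p Hp) (not_eq_sym Ne)). lra.
  - intros x Hx Hxp. destruct eqdec as [E|]; auto. exfalso. apply Hxp, Hinj; auto.
Qed.

Section AtScale.
Variable rho : R.
Hypothesis Hrho : 0 < rho.
Hypothesis Hsep : forall x y, In x (x0 :: P) -> In y (x0 :: P) -> x <> y -> 2 * rho <= d x y.

Let sep_P x y : In x P -> In y P -> x <> y -> rho <= d x y.
Proof. intros Hx Hy Hxy. pose proof (Hsep x y (or_intror Hx) (or_intror Hy) Hxy). lra. Qed.

Let sep_x0 y : In y P -> rho <= d x0 y.
Proof.
  intros Hy. assert (x0 <> y) by (intros ->; contradiction).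
  pose proof (Hsep x0 y (or_introl eq_refl) (or_intror Hy) H). lra.
Qed.

(* Peak over the positive minus peak over the negative part of the support:
   a 2-Lipschitz function equal to rho * sign(c p) at each support point. *)
Lemma signed_peak : exists phi, lip0_fun d x0 2 phi /\ (forall y, Rabs (phi y) <= rho) /\
  (forall p, In p P -> c p * phi p = Rabs (c p) * rho) /\
  (forall p y t, In p P -> 0 < t -> Rabs (c p) * t <= c p * phi y ->
     exists q, In q P /\ d y q <= rho - t).
Proof.
  set (Ppos := filter (fun q => if Rlt_dec 0 (c q) then true else false) P).
  set (Pneg := filter (fun q => if Rlt_dec 0 (c q) then false else true) P).
  assert (Hpos : forall q, In q Ppos <-> In q P /\ 0 < c q).
  { intros q. unfold Ppos. rewrite filter_In.
    destruct Rlt_dec; split; intros [? ?]; auto; try discriminate; contradiction. }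
  assert (Hneg : forall q, In q Pneg <-> In q P /\ ~ 0 < c q).
  { intros q. unfold Pneg. rewrite filter_In.
    destruct Rlt_dec; split; intros [? ?]; auto; try discriminate; contradiction. }
  assert (Hrho' : 0 <= rho) by lra.
  exists (fun y => peak d rho Ppos y - peak d rho Pneg y). split; [|split; [|split]].
  - split.
    + rewrite !peak_far; [lra | |]; intros q Hq; apply sep_x0;
        [apply Hneg in Hq | apply Hpos in Hq]; tauto.
    + intros y z. pose proof (peak_lip d rho Hmet Ppos y z).
      pose proof (peak_lip d rho Hmet Pneg y z).
      unfold Rabs in *; repeat destruct Rcase_abs; lra.
  - intros y. pose proof (peak_bounds d rho Hmet Hrho' Ppos y).
    pose proof (peak_bounds d rho Hmet Hrho' Pneg y).
    unfold Rabs; destruct Rcase_abs; lra.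
  - intros p Hp. destruct (Rlt_dec 0 (c p)) as [Hcp|Hcp].
    + rewrite (peak_center d rho Hmet Hrho' Ppos p) by (apply Hpos; auto).
      rewrite (peak_far d rho Pneg p), Rabs_right by
        (lra || (intros q Hq; apply Hneg in Hq as [Hq Hcq];
                 apply sep_P; auto; intros <-; contradiction)).
      ring.
    + rewrite (peak_center d rho Hmet Hrho' Pneg p) by (apply Hneg; auto).
      rewrite (peak_far d rho Ppos p), Rabs_left1 by
        (lra || (intros q Hq; apply Hpos in Hq as [Hq Hcq];
                 apply sep_P; auto; intros <-; contradiction)).
      ring.
  - intros p y t Hp Ht Hle.
    pose proof (peak_bounds d rho Hmet Hrho' Ppos y).
    pose proof (peak_bounds d rho Hmet Hrho' Pneg y).
    pose proof (Hc0 p Hp). destruct (Rlt_dec 0 (c p)) as [Hcp|Hcp].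
    + rewrite Rabs_right in Hle by lra.
      destruct (peak_witness d rho Ppos y t) as [q [Hq Hd]]; [auto | nra |].
      exists q. split; [apply Hpos in Hq|]; tauto.
    + rewrite Rabs_left in Hle by lra.
      destruct (peak_witness d rho Pneg y t) as [q [Hq Hd]]; [auto | nra |].
      exists q. split; [apply Hneg in Hq|]; tauto.
Qed.

(* Testing against the signed peak: a small displacement of nu puts every
   image w(p) near the support. *)
Lemma displaced_near_support (kappa cmin : R) (w : M -> M) :
  0 < kappa <= rho / 2 -> (forall p, In p P -> cmin <= Rabs (c p)) ->
  fdist_le d x0 (push w (delta_sum c P)) (delta_sum c P) (cmin * kappa / 2) ->
  forall p, In p P -> exists q, In q P /\ d (w p) q <= kappa.
Proof.
  intros Hk Hcmin Hfd p Hp.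
  destruct signed_peak as [phi [Hlip [Hbd [Hval Hwit]]]].
  pose proof (Hfd 2 phi ltac:(lra) Hlip) as H. unfold push, delta_sum in H.
  set (term := fun p => Rabs (c p) * rho - c p * phi (w p)).
  assert (Hterm : forall p, In p P -> 0 <= term p).
  { intros x _. unfold term. pose proof (Rle_abs (c x * phi (w x))).
    rewrite Rabs_mult in H0. pose proof (Hbd (w x)). pose proof (Rabs_pos (c x)). nra. }
  assert (Hsum : lsum term P <= cmin * kappa).
  { unfold term. rewrite lsum_minus, <- (lsum_ext (fun p => c p * phi p)) by auto.
    pose proof (Rle_abs (lsum (fun p => c p * phi p) P - lsum (fun p => c p * phi (w p)) P)).
    rewrite Rabs_minus_sym in H0. lra. }
  pose proof (lsum_term_le term P p Hterm Hp). pose proof (Hcmin p Hp).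
  destruct (Hwit p (w p) (rho - kappa)) as [q [Hq Hd]]; auto; [lra | unfold term in *; nra |].
  exists q. split; auto. lra.
Qed.

(* Testing against single tents: the coefficients carried to each support
   point q by a selection sel of nearby support points add up to about c q. *)
Lemma mass_balance (kappa eta : R) (w sel : M -> M) (q : M) :
  0 <= kappa <= rho -> In q P ->
  (forall p, In p P -> In (sel p) P /\ d (w p) (sel p) <= kappa) ->
  fdist_le d x0 (push w (delta_sum c P)) (delta_sum c P) eta ->
  rho * Rabs (lsum (fun p => if eqdec (sel p) q then c p else 0) P - c q)
    <= kappa * lsum (fun p => Rabs (c p)) P + eta.
Proof.
  intros Hk Hq Hsel Hfd. pose proof Hmet as [Hp [_ [Hs Ht]]].
  assert (Htent : lip0_fun d x0 1 (tent d rho q)).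
  { split; [apply tent_far, sep_x0; auto | intros; rewrite Rmult_1_l; apply tent_lip; auto]. }
  pose proof (Hfd 1 _ Rle_0_1 Htent) as H. unfold push, delta_sum in H.
  rewrite (lsum_single (fun p => c p * tent d rho q p) P q), tent_center, Rmult_1_r in H; auto;
    [| lra | intros x Hx Hxq; rewrite tent_far; [ring | apply sep_P; auto]].
  assert (Hpt : forall p, In p P -> Rabs (rho * (if eqdec (sel p) q then c p else 0)
                                          - c p * tent d rho q (w p)) <= kappa * Rabs (c p)).
  { intros p Hp0. destruct (Hsel p Hp0) as [Hs1 Hs2]. pose proof (Rabs_pos (c p)).
    destruct (eqdec (sel p) q) as [<-|Hne].
    - rewrite tent_near by lra.
      replace (rho * c p - c p * (rho - d (w p) (sel p))) with (c p * d (w p) (sel p)) by ring.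
      rewrite Rabs_mult, (Rabs_right (d _ _)) by (apply Rle_ge, Hp). nra.
    - rewrite tent_far.
      + rewrite Rmult_0_r, Rmult_0_r, Rminus_0_r, Rabs_R0. nra.
      + pose proof (Hsep (sel p) q (or_intror Hs1) (or_intror Hq) Hne).
        pose proof (Ht (sel p) (w p) q). rewrite (Hs (sel p) (w p)) in *. lra. }
  assert (Hsum : Rabs (lsum (fun p => rho * (if eqdec (sel p) q then c p else 0)) P
                       - lsum (fun p => c p * tent d rho q (w p)) P)
                 <= kappa * lsum (fun p => Rabs (c p)) P).
  { rewrite <- lsum_minus, <- lsum_scal. eapply Rle_trans; [apply lsum_abs | apply lsum_le; auto]. }
  rewrite lsum_scal in Hsum.
  rewrite <- (Rabs_right rho), <- Rabs_mult by lra.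
  replace (rho * (lsum (fun p => if eqdec (sel p) q then c p else 0) P - c q)) with
    ((rho * lsum (fun p => if eqdec (sel p) q then c p else 0) P
      - lsum (fun p => c p * tent d rho q (w p)) P)
     + (lsum (fun p => c p * tent d rho q (w p)) P - c q * rho)) by ring.
  eapply Rle_trans; [apply Rabs_triang | lra].
Qed.

End AtScale.

Hypothesis Hcinj : forall p q, In p P -> In q P -> c p = c q -> p = q.

(* The matching statement, with the scale rho taken from the separation of the
   support and the tolerances from the minimal coefficient and coefficient gap. *)
Lemma near_fixed_points eps : 0 < eps -> exists eta, 0 < eta /\
  forall w : M -> M, fdist_le d x0 (push w (delta_sum c P)) (delta_sum c P) eta ->
    forall p, In p P -> d (w p) p <= eps.
Proof.
  intros Heps. pose proof Hmet as [Hp [Hz _]].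
  destruct (finite_pair_lower_bound d (x0 :: P)) as [m [Hm Hsep]].
  { intros x y _ _ Hxy. destruct (Hp x y) as [H|H]; auto. exfalso; apply Hxy, Hz; auto. }
  set (rho := m / 2).
  assert (Hrho : 0 < rho) by (unfold rho; lra).
  assert (Hsep' : forall x y, In x (x0 :: P) -> In y (x0 :: P) -> x <> y -> 2 * rho <= d x y)
    by (intros; unfold rho; replace (2 * (m / 2)) with m by field; auto).
  destruct (finite_lower_bound (fun p => Rabs (c p)) P) as [cmin [Hcmin Hcmin_le]].
  { intros p Hp0. apply Rabs_pos_lt, Hc0; auto. }
  destruct (finite_pair_lower_bound (fun p q => Rabs (c p - c q)) P) as [gap [Hgap Hgap_le]].
  { intros p q Hp0 Hq Hpq. apply Rabs_pos_lt. intros E. apply Hpq, Hcinj; auto; lra. }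
  set (g0 := Rmin cmin gap). set (S := lsum (fun p => Rabs (c p)) P).
  assert (Hg0 : 0 < g0) by (apply Rmin_glb_lt; auto).
  assert (HS : 0 <= S) by (apply lsum_nonneg; intros; apply Rabs_pos).
  set (kappa := Rmin (Rmin (rho / 2) eps) (rho * g0 / (S + cmin + 1))).
  assert (Hk0 : 0 < kappa).
  { repeat apply Rmin_glb_lt; try lra. apply Rdiv_lt_0_compat; [apply Rmult_lt_0_compat|]; lra. }
  assert (Hk1 : kappa <= rho / 2) by (eapply Rle_trans; apply Rmin_l).
  assert (Hk2 : kappa <= eps) by (eapply Rle_trans; [apply Rmin_l | apply Rmin_r]).
  assert (Hk3 : kappa * (S + cmin + 1) <= rho * g0).
  { pose proof (Rmin_r (Rmin (rho / 2) eps) (rho * g0 / (S + cmin + 1))) as H.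
    fold kappa in H. apply (Rmult_le_compat_r (S + cmin + 1)) in H; [|lra].
    unfold Rdiv in H. rewrite Rmult_assoc, Rinv_l, Rmult_1_r in H by lra. exact H. }
  exists (cmin * kappa / 2). split; [nra|]. intros w Hw.
  pose (sel := fun p => epsilon (inhabits x0) (fun q => In q P /\ d (w p) q <= kappa)).
  assert (Hsel : forall p, In p P -> In (sel p) P /\ d (w p) (sel p) <= kappa).
  { intros p Hp0. apply epsilon_spec.
    apply (displaced_near_support rho Hrho Hsep' kappa cmin w); auto; lra. }
  assert (Hid : forall p, In p P -> sel p = p).
  { apply (mass_preserving_selection_is_identity sel g0).
    - intros p Hp0. apply Hsel; auto.
    - intros p Hp0. pose proof (Hcmin_le p Hp0). pose proof (Rmin_l cmin gap). unfold g0. lra.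
    - intros p q Hp0 Hq Hpq. pose proof (Hgap_le p q Hp0 Hq Hpq). pose proof (Rmin_r cmin gap).
      unfold g0. lra.
    - intros q Hq. assert (Hk : 0 <= kappa <= rho) by lra.
      pose proof (mass_balance rho Hrho Hsep' kappa (cmin * kappa / 2) w sel q Hk Hq Hsel Hw).
      pose proof (Rmult_lt_0_compat kappa (cmin / 2 + 1) Hk0 ltac:(lra)).
      apply (Rmult_lt_reg_l rho); auto. fold S in H. lra. }
  intros p Hp0. destruct (Hsel p Hp0) as [_ Hd]. rewrite Hid in Hd; auto. lra.
Qed.

End Matching.

Lemma iter_fix {M : Type} (f : M -> M) x0 n : f x0 = x0 -> Nat.iter n f x0 = x0.
Proof. intros H; induction n; simpl; auto. rewrite IHn; auto. Qed.

Section DualDistance.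
Context {M : Type}.
Variables (d : M -> M -> R) (x0 : M).

Lemma fdist_mono mu nu r r' : r <= r' -> fdist_le d x0 mu nu r -> fdist_le d x0 mu nu r'.
Proof.
  intros Hr H L phi HL Hphi. specialize (H L phi HL Hphi).
  pose proof (Rmult_le_compat_r L r r' HL Hr). lra.
Qed.

Lemma fdist_sym mu nu r : fdist_le d x0 mu nu r -> fdist_le d x0 nu mu r.
Proof. intros H L phi HL Hphi. rewrite Rabs_minus_sym. auto. Qed.

Lemma fdist_trans mu nu xi r r' :
  fdist_le d x0 mu nu r -> fdist_le d x0 nu xi r' -> fdist_le d x0 mu xi (r + r').
Proof.
  intros H H' L phi HL Hphi. specialize (H L phi HL Hphi). specialize (H' L phi HL Hphi).
  replace (mu phi - xi phi) with ((mu phi - nu phi) + (nu phi - xi phi)) by ring.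
  eapply Rle_trans; [apply Rabs_triang | lra].
Qed.

Lemma fdist_agree mu nu : (forall phi, phi x0 = 0 -> mu phi = nu phi) -> fdist_le d x0 mu nu 0.
Proof. intros H L phi HL [Hphi0 _]. rewrite H, Rminus_diag, Rabs_R0; auto. lra. Qed.

End DualDistance.

Section Molecules.
Context {M : Type}.
Variables (d : M -> M -> R) (x0 : M).

Lemma molecule_map (c : M -> R) (P : list M) phi :
  molecule (map (fun p => (c p, p)) P) phi = delta_sum c P phi.
Proof. induction P; [reflexivity|]. unfold delta_sum in *. simpl. rewrite <- IHP. reflexivity. Qed.

Lemma delta_sum_in_FM (c : M -> R) (P : list M) : in_FM d x0 (delta_sum c P).
Proof.
  intros eps Heps. exists (map (fun p => (c p, p)) P).
  apply (fdist_mono d x0 _ _ 0); [lra|]. apply fdist_agree. intros. rewrite molecule_map; auto.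
Qed.

Lemma finite_support (X : list M) :
  exists P, NoDup P /\ ~ In x0 P /\ forall x, In x X -> x = x0 \/ In x P.
Proof.
  exists (filter (fun x => if eqdec x x0 then false else true) (nodup eqdec X)).
  split; [apply NoDup_filter, NoDup_nodup|]. split.
  - rewrite filter_In. destruct eqdec; [intros [_ E]; discriminate | contradiction].
  - intros x Hx. destruct (eqdec x x0) as [E|Ne]; [left; auto | right].
    rewrite filter_In, nodup_In. destruct eqdec; [contradiction | auto].
Qed.

Lemma molecule_as_delta_sum (l : list (R * M)) (P : list M) : NoDup P ->
  (forall q, In q l -> snd q = x0 \/ In (snd q) P) ->
  exists b, forall phi, phi x0 = 0 -> molecule l phi = delta_sum b P phi.
Proof.
  intros HnP. induction l as [|[a y] l IH]; intros Hl.
  - exists (fun _ => 0). intros phi _. unfold delta_sum. rewrite lsum_zero; [reflexivity|].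
    intros; ring.
  - destruct IH as [b Hb]; [intros q Hq; apply Hl; right; auto|].
    destruct (Hl (a, y) (or_introl eq_refl)) as [Ey|Hy]; simpl in *.
    + exists b. intros phi Hphi. unfold molecule in *. simpl. rewrite Ey, Hphi, Hb; auto. ring.
    + exists (fun p => (if eqdec p y then a else 0) + b p). intros phi Hphi.
      unfold delta_sum. rewrite (lsum_ext _ (fun p => (if eqdec p y then a else 0) * phi p + b p * phi p))
        by (intros; ring).
      rewrite lsum_plus, (lsum_single _ P y); auto.
      * unfold molecule in *. simpl. rewrite Hb; auto. destruct eqdec; [reflexivity | contradiction].
      * intros x _ Hx. destruct eqdec; [contradiction | ring].
Qed.

Lemma delta_sum_perturb (b e : M -> R) (P : list M) (tau : R) :
  (forall p, Rabs (e p) <= tau) ->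
  fdist_le d x0 (delta_sum (fun p => b p + e p) P) (delta_sum b P) (tau * lsum (fun p => d p x0) P).
Proof.
  intros He L phi HL [Hphi0 Hphi]. unfold delta_sum.
  rewrite <- lsum_minus, (lsum_ext _ (fun p => e p * phi p)) by (intros; ring).
  eapply Rle_trans; [apply lsum_abs|].
  replace (tau * lsum (fun p => d p x0) P * L) with (lsum (fun p => tau * L * d p x0) P)
    by (rewrite lsum_scal; ring).
  apply lsum_le. intros p _.
  pose proof (Hphi p x0) as H1. rewrite Hphi0, Rminus_0_r in H1.
  pose proof (He p). pose proof (Rabs_pos (e p)). pose proof (Rabs_pos (phi p)).
  rewrite Rabs_mult. nra.
Qed.

End Molecules.

Lemma avoid_finite (L : list R) lo hi : lo < hi -> exists x, lo < x < hi /\ ~ In x L.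
Proof.
  revert lo hi. induction L as [|h L IH]; intros lo hi H.
  - exists ((lo + hi) / 2). split; [lra | auto].
  - destruct (Rlt_dec lo h); [destruct (Rlt_dec h hi)|].
    + destruct (IH lo h) as [x [Hx Hn]]; auto. exists x. split; [lra|]. intros [E|E]; [lra | auto].
    + destruct (IH lo hi) as [x [Hx Hn]]; auto. exists x. split; [lra|]. intros [E|E]; [lra | auto].
    + destruct (IH lo hi) as [x [Hx Hn]]; auto. exists x. split; [lra|]. intros [E|E]; [lra | auto].
Qed.

Lemma perturb_coefficients {M : Type} (P : list M) (b : M -> R) tau : 0 < tau -> NoDup P ->
  exists e : M -> R, (forall p, Rabs (e p) <= tau) /\
    (forall p, In p P -> b p + e p <> 0) /\
    (forall p q, In p P -> In q P -> b p + e p = b q + e q -> p = q).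
Proof.
  intros Htau. induction P as [|a P IH]; intros HnP.
  - exists (fun _ => 0). split; [intros; rewrite Rabs_R0; lra|]. split; intros; contradiction.
  - inversion HnP as [|a' P' Ha HnP']; subst. destruct IH as [e' [He1 [He2 He3]]]; auto.
    destruct (avoid_finite (0 :: map (fun q => b q + e' q) P) (b a) (b a + tau)) as [x [Hx Hnx]];
      [lra|].
    exists (fun y => if eqdec y a then x - b a else e' y). split; [|split].
    + intros p. destruct eqdec; auto. rewrite Rabs_right; lra.
    + intros p Hp. destruct (eqdec p a) as [->|Np].
      * replace (b a + (x - b a)) with x by ring. intros E; apply Hnx; left; auto.
      * apply He2. destruct Hp as [Hp|Hp]; [congruence | auto].
    + intros p q Hp Hq E. destruct (eqdec p a) as [Ep|Np]; destruct (eqdec q a) as [Eq|Nq].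
      * congruence.
      * exfalso. apply Hnx. right. apply in_map_iff. exists q.
        destruct Hq as [Hq|Hq]; [congruence|]. split; [subst p; rewrite <- E; ring | auto].
      * exfalso. apply Hnx. right. apply in_map_iff. exists p.
        destruct Hp as [Hp|Hp]; [congruence|]. split; [subst q; rewrite E; ring | auto].
      * destruct Hp as [Hp|Hp]; [congruence|]. destruct Hq as [Hq|Hq]; [congruence|]. auto.
Qed.

(* A
   combination of Dirac functionals with distinct nonzero coefficients, close
   to an interior point and supported on those points, is recurrent, and by
   [near_fixed_points] its recurrence moves each point of its support little. *)
Lemma joint_recurrence {M : Type} (d : M -> M -> R) (x0 : M) (f : M -> M) :
  is_metric d -> f x0 = x0 -> R_hatf_interior_nonempty d x0 f ->
  forall (F : list M) eps N, 0 < eps ->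
    exists n, (N <= n)%nat /\ forall x, In x F -> d (Nat.iter n f x) x <= eps.
Proof.
  intros Hmet Hf0 [mu0 [Hmu0 [r [Hr Hball]]]] F eps N Heps.
  pose proof Hmet as [Hp [Hz _]].
  destruct (Hmu0 (r / 2)) as [m0 Hm0]; [lra|].
  destruct (finite_support x0 (F ++ map snd m0)) as [P [HnP [Hx0P HP]]].
  destruct (molecule_as_delta_sum x0 m0 P HnP) as [b Hb].
  { intros q Hq. apply HP, in_or_app. right. apply in_map; auto. }
  set (D := lsum (fun p => d p x0) P).
  assert (HD : 0 <= D) by (apply lsum_nonneg; auto).
  set (tau := r / (4 * (D + 1))).
  assert (Htau : 0 < tau) by (unfold tau; apply Rdiv_lt_0_compat; lra).
  assert (HtauD : tau * D <= r / 4).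
  { assert (tau * (D + 1) = r / 4) by (unfold tau; field; lra). nra. }
  destruct (perturb_coefficients P b tau Htau HnP) as [e [He [Hnz Hdist]]].
  set (c := fun p => b p + e p).
  assert (Hnu : in_R_hatf d x0 f (delta_sum c P)).
  { apply Hball; [apply delta_sum_in_FM|]. exists (3 * r / 4). split; [lra|].
    apply (fdist_mono d x0 _ _ (tau * D + 0 + r / 2)); [lra|].
    apply (fdist_trans d x0 _ (molecule m0)); [apply (fdist_trans d x0 _ (delta_sum b P))|].
    - apply delta_sum_perturb; auto.
    - apply fdist_agree. intros phi Hphi. symmetry. auto.
    - apply fdist_sym; auto. }
  destruct (near_fixed_points d x0 Hmet P c HnP Hx0P Hnz Hdist eps Heps) as [eta [Heta Hfix]].
  destruct Hnu as [_ Hrec]. destruct (Hrec eta Heta N) as [n [Hn Hfd]].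
  exists n. split; auto. intros x Hx.
  destruct (HP x (in_or_app _ _ _ (or_introl Hx))) as [->|HxP].
  - rewrite iter_fix by auto. replace (d x0 x0) with 0 by (symmetry; apply Hz; auto). lra.
  - apply (Hfix (Nat.iter n f)); auto.
Qed.

Section Transport.
Context {M : Type}.
Variables (d : M -> M -> R) (x0 : M).

Lemma push_lipschitz (g : M -> M) (C : R) mu nu r :
  g x0 = x0 -> 0 <= C -> lipschitz_map d C g ->
  fdist_le d x0 mu nu r -> fdist_le d x0 (push g mu) (push g nu) (r * C).
Proof.
  intros Hg0 HC Hg H L phi HL [Hphi0 Hphi].
  replace (r * C * L) with (r * (L * C)) by ring. apply H; [nra|]. split.
  - rewrite Hg0; auto.
  - intros x y. eapply Rle_trans; [apply Hphi|]. rewrite Rmult_assoc. apply Rmult_le_compat_l; auto.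
Qed.

Lemma push_molecule_displacement (g : M -> M) (l : list (R * M)) e :
  (forall q, In q l -> d (g (snd q)) (snd q) <= e) ->
  fdist_le d x0 (push g (molecule l)) (molecule l) (lsum (fun q => Rabs (fst q)) l * e).
Proof.
  intros Hl L phi HL [_ Hphi]. unfold push. induction l as [|q l IH]; simpl.
  - unfold molecule. simpl. rewrite Rminus_0_r, Rabs_R0. lra.
  - unfold molecule in *. simpl.
    replace (fst q * phi (g (snd q)) + _ - _) with
      (fst q * (phi (g (snd q)) - phi (snd q)) +
       (fold_right (fun p acc => fst p * phi (g (snd p)) + acc) 0 l
        - fold_right (fun p acc => fst p * phi (snd p) + acc) 0 l)) by ring.
    eapply Rle_trans; [apply Rabs_triang|]. rewrite Rabs_mult.
    assert (Hq : Rabs (phi (g (snd q)) - phi (snd q)) <= L * e).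
    { eapply Rle_trans; [apply Hphi | apply Rmult_le_compat_l; [auto | apply Hl; left; auto]]. }
    pose proof (Rmult_le_compat_l _ _ _ (Rabs_pos (fst q)) Hq).
    pose proof (IH (fun q' Hq' => Hl q' (or_intror Hq'))). lra.
Qed.

Lemma push_near_molecule (g : M -> M) (C : R) mu l e1 e2 :
  g x0 = x0 -> 0 <= C -> lipschitz_map d C g ->
  fdist_le d x0 mu (molecule l) e1 -> (forall q, In q l -> d (g (snd q)) (snd q) <= e2) ->
  fdist_le d x0 (push g mu) mu (e1 * C + lsum (fun q => Rabs (fst q)) l * e2 + e1).
Proof.
  intros Hg0 HC Hg Hl Hdisp.
  apply (fdist_trans d x0 _ (molecule l)); [apply (fdist_trans d x0 _ (push g (molecule l)))|].
  - apply push_lipschitz; auto.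
  - apply push_molecule_displacement; auto.
  - apply fdist_sym; auto.
Qed.

End Transport.

Section PowerBounded.
Context {M : Type}.
Variables (d : M -> M -> R) (x0 : M) (f : M -> M) (C : R).
Hypothesis Hmet : is_metric d.
Hypothesis Hf0 : f x0 = x0.
Hypothesis HC : 0 < C.
Hypothesis Hpow : forall n : nat, lipschitz_map d C (Nat.iter (S n) f).

Let iter_lip n : (1 <= n)%nat -> lipschitz_map d C (Nat.iter n f).
Proof. destruct n as [|n]; [lia | intros; apply Hpow]. Qed.

(* By density of molecules and equicontinuity of the powers, a functional of
   F(M) is almost fixed by hat f^n as soon as f^n almost fixes finitely many points. *)
Lemma small_displacement_suffices mu eps : in_FM d x0 mu -> 0 < eps ->
  exists (X : list M) (delta : R), 0 < delta /\ forall n, (1 <= n)%nat ->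
    (forall x, In x X -> d (Nat.iter n f x) x <= delta) ->
    fdist_le d x0 (hatf_iter f n mu) mu eps.
Proof.
  intros Hmu Heps.
  set (e1 := eps / (2 * (C + 1))).
  assert (He1 : 0 < e1) by (unfold e1; apply Rdiv_lt_0_compat; lra).
  assert (He1C : e1 * (C + 1) = eps / 2) by (unfold e1; field; lra).
  destruct (Hmu e1 He1) as [l Hl].
  set (A := lsum (fun q => Rabs (fst q)) l).
  assert (HA : 0 <= A) by (apply lsum_nonneg; intros; apply Rabs_pos).
  set (e2 := eps / (2 * (A + 1))).
  assert (He2 : 0 < e2) by (unfold e2; apply Rdiv_lt_0_compat; lra).
  assert (He2A : e2 * (A + 1) = eps / 2) by (unfold e2; field; lra).
  exists (map snd l), e2. split; auto. intros n Hn HX.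
  apply (fdist_mono d x0 _ _ (e1 * C + A * e2 + e1)); [nra|].
  apply push_near_molecule.
  - apply iter_fix; auto.
  - lra.
  - apply iter_lip; auto.
  - exact Hl.
  - intros q Hq. apply HX, in_map; auto.
Qed.

Lemma return_times_pointwise (s : nat -> M) (nj : nat -> nat) :
  (forall x eps, 0 < eps -> exists i, d x (s i) < eps) ->
  (forall j, (1 <= nj j)%nat) ->
  (forall j i, (i <= j)%nat -> d (Nat.iter (nj j) f (s i)) (s i) <= / INR (S j)) ->
  forall y delta, 0 < delta ->
    exists J, forall j, (J <= j)%nat -> d (Nat.iter (nj j) f y) y <= delta.
Proof.
  intros Hs Hpos Hret y delta Hdelta. pose proof Hmet as [_ [_ [Hsym Htri]]].
  set (a := delta / (C + 2)).
  assert (Ha : 0 < a) by (unfold a; apply Rdiv_lt_0_compat; lra).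
  assert (HaC : a * (C + 2) = delta) by (unfold a; field; lra).
  destruct (Hs y a Ha) as [i Hi].
  destruct (archimed_cor1 a Ha) as [J0 [HJ0 HJ0pos]].
  exists (Nat.max i J0). intros j Hj.
  pose proof (Hret j i ltac:(lia)) as H1.
  assert (H2 : / INR (S j) <= / INR J0).
  { apply Rinv_le_contravar; [apply lt_0_INR; lia | apply le_INR; lia]. }
  pose proof (iter_lip (nj j) (Hpos j) y (s i)) as H3.
  pose proof (Htri (Nat.iter (nj j) f y) (Nat.iter (nj j) f (s i)) y).
  pose proof (Htri (Nat.iter (nj j) f (s i)) (s i) y).
  rewrite (Hsym (s i) y) in *. nra.
Qed.

End PowerBounded.

Lemma diagonal_return_times {M : Type} (d : M -> M -> R) (x0 : M) (f : M -> M) (s : nat -> M) :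
  is_metric d -> f x0 = x0 -> R_hatf_interior_nonempty d x0 f ->
  exists nj : nat -> nat, (forall j, (nj j < nj (S j))%nat) /\ (forall j, (1 <= nj j)%nat) /\
    forall j i, (i <= j)%nat -> d (Nat.iter (nj j) f (s i)) (s i) <= / INR (S j).
Proof.
  intros Hmet Hf0 Hint.
  assert (Hstep : forall j N : nat, {n : nat | (N <= n)%nat /\
            forall i, (i <= j)%nat -> d (Nat.iter n f (s i)) (s i) <= / INR (S j)}).
  { intros j N. apply constructive_indefinite_description.
    assert (Hpos : 0 < / INR (S j)) by (apply Rinv_0_lt_compat, lt_0_INR; lia).
    destruct (joint_recurrence d x0 f Hmet Hf0 Hint (map s (seq 0 (S j))) _ N Hpos)
      as [n [Hn Hx]].
    exists n. split; auto. intros i Hi. apply Hx, in_map, in_seq. lia. }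
  set (nj := fix nj (j : nat) : nat :=
         match j with
         | O => proj1_sig (Hstep O 1%nat)
         | S j' => proj1_sig (Hstep (S j') (S (nj j')))
         end).
  assert (Hinc : forall j, (S (nj j) <= nj (S j))%nat)
    by (intros j; exact (proj1 (proj2_sig (Hstep (S j) (S (nj j)))))).
  exists nj. split; [|split].
  - intros j. specialize (Hinc j). lia.
  - intros [|j]; [exact (proj1 (proj2_sig (Hstep 0%nat 1%nat))) | specialize (Hinc j); lia].
  - intros [|j] i Hi; [exact (proj2 (proj2_sig (Hstep 0%nat 1%nat)) i Hi)|].
    exact (proj2 (proj2_sig (Hstep (S j) (S (nj j)))) i Hi).
Qed.

Lemma eventually_on_finite {A : Type} (Q : nat -> A -> Prop) (X : list A) :
  (forall x, exists J, forall j, (J <= j)%nat -> Q j x) ->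
  exists J, forall j, (J <= j)%nat -> forall x, In x X -> Q j x.
Proof.
  intros H. induction X as [|x X [J1 HJ1]].
  - exists 0%nat. intros j _ x [].
  - destruct (H x) as [J2 HJ2]. exists (Nat.max J1 J2).
    intros j Hj y [<-|Hy]; [apply HJ2 | apply HJ1]; auto; lia.
Qed.

Theorem corollary3p8 (M : Type) (d : M -> M -> R) (x0 : M) (f : M -> M)
  (C : R)
  (Hmet : is_metric d) (Hcomp : complete_metric d)
  (Hflip : exists L, lipschitz_map d L f) (Hf0 : f x0 = x0)
  (Hint : R_hatf_interior_nonempty d x0 f)
  (HC : 0 < C) (Hpow : forall n : nat, lipschitz_map d C (Nat.iter (S n) f)) :
  (forall mu, in_FM d x0 mu -> in_R_hatf d x0 f mu) /\
  (separable_metric d -> hatf_rigid d x0 f).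
Proof.
  split.
  - intros mu Hmu. split; auto. intros eps Heps N.
    destruct (small_displacement_suffices d x0 f C Hf0 HC Hpow mu eps Hmu Heps)
      as [X [delta [Hdelta Hsuff]]].
    destruct (joint_recurrence d x0 f Hmet Hf0 Hint X delta (S N) Hdelta) as [n [Hn HX]].
    exists n. split; [lia | apply Hsuff; [lia | auto]].
  - intros [s Hs].
    destruct (diagonal_return_times d x0 f s Hmet Hf0 Hint) as [nj [Hinc [Hpos Hret]]].
    exists nj. split; auto. intros mu Hmu eps Heps.
    destruct (small_displacement_suffices d x0 f C Hf0 HC Hpow mu eps Hmu Heps)
      as [X [delta [Hdelta Hsuff]]].
    destruct (eventually_on_finite (fun j x => d (Nat.iter (nj j) f x) x <= delta) X)
      as [J HJ].
    { intros y. apply (return_times_pointwise d f C Hmet HC Hpow s nj); auto. }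
    exists J. intros j Hj. apply Hsuff; auto.
Qed.
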